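(* Let $n\ge2$ and $D=\mathrm{pdiag}(d_1,\dots,d_n)$ with $d_1\le\dots\le d_n$. If $n=2$ and $d_2<0$, then $\mathrm{attr}(D)=\{x\in\overline{\mathbb{R}}^2: x_1=x_2\}$, so $D$ is not strongly stable. In all other cases $D$ is strongly stable.
   Context: Max-plus conventions: $\overline{\mathbb{R}}=\mathbb{R}\cup\{-\infty\}$, $\varepsilon=-\infty$, $\oplus=\max$, $\otimes=+$; $(A\otimes x)_i=\max_j(A_{ij}+x_j)$, $(\lambda\otimes x)_i=\lambda+x_i$, $A^k$ is the $k$-fold max-plus power and $A^0\otimes x=x$. $\mathrm{pdiag}(d_1,\dots,d_n)$ is the matrix with real diagonal entries $d_i$ and all off-diagonal entries equal to the real number $0$. For finite $A\in\mathbb{R}^{n\times n}$, $\lambda(A)$ is the maximum cycle mean, $\lambda(A)=\max\{(a_{i_1i_2}+\dots+a_{i_ki_1})/k\}$ over $k\ge1$ and distinct $i_1,\dots,i_k\in[n]$; it is the unique max-plus eigenvalue of $A$. The eigenspace is $V(A)=\{x\in\overline{\mathbb{R}}^n: A\otimes x=\lambda(A)\otimes x\}$ (including the all-$\varepsilon$ vector). $\mathrm{attr}(A)=\{x\in\overline{\mathbb{R}}^n: A^k\otimes x\in V(A)\text{ for some } k\ge0\}$; $A$ is strongly stable if $\mathrm{attr}(A)=\overline{\mathbb{R}}^n$. *)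

(* R : realType. Max-plus semiring R ∪ {-oo} modelled as option R,
   with None = epsilon = -oo. *)
From HB Require Import structures.
From mathcomp Require Import all_boot all_order all_algebra.
From mathcomp Require Import reals.
Set Implicit Arguments. Unset Strict Implicit. Unset Printing Implicit Defensive.
Import Order.TTheory GRing.Theory Num.Theory.
Local Open Scope ring_scope.

Section MaxPlus.
Variable R : realType.

Definition mpadd (a b : option R) : option R :=
  match a, b with
  | None, _ => b
  | _, None => a
  | Some x, Some y => Some (Num.max x y)
  end.

Definition mpmul (a b : option R) : option R :=
  match a, b with
  | Some x, Some y => Some (x + y)
  | _, _ => None
  end.

Definition mpmx (n : nat) := 'I_n -> 'I_n -> option R.
Definition mpvec (n : nat) := 'I_n -> option R.

Definition mpmxmul n (A B : mpmx n) : mpmx n :=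
  fun i j => \big[mpadd/None]_(l < n) mpmul (A i l) (B l j).

Definition mpone n : mpmx n := fun i j => if i == j then Some 0 else None.

Definition mppow n (A : mpmx n) (k : nat) : mpmx n := iter k (mpmxmul A) (@mpone n).

Definition mpapply n (A : mpmx n) (x : mpvec n) : mpvec n :=
  fun i => \big[mpadd/None]_(j < n) mpmul (A i j) (x j).

Definition mpscale n (l : R) (x : mpvec n) : mpvec n := fun i => mpmul (Some l) (x i).

Definition mpembed n (A : 'M[R]_n) : mpmx n := fun i j => Some (A i j).

(* mean of the cycle (i_1 ... i_k i_1) given as the sequence s = [:: i_1; ...; i_k] *)
Definition cycle_mean n (A : 'M[R]_n) (s : seq 'I_n) : R :=
  (\sum_(p <- zip s (rot 1 s)) A p.1 p.2) / (size s)%:R.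

Definition elem_cycles n : seq (seq 'I_n) :=
  [seq s <- flatten [seq [seq tval t | t <- enum {: k.-tuple 'I_n}] | k <- iota 1 n]
     | uniq s].

(* maximum cycle mean lambda(A): the maximum of cycle_mean over elem_cycles
   (the list is nonempty when n >= 1). *)
Definition mcm n (A : 'M[R]_n) : R :=
  let l := [seq cycle_mean A s | s <- elem_cycles n] in
  foldr Num.max (head 0 l) l.

(* eigenspace V(A) = {x | A ⊗ x = lambda(A) ⊗ x} (contains the all-epsilon vector) *)
Definition in_eigenspace n (A : 'M[R]_n) (x : mpvec n) : Prop :=
  forall i, mpapply (mpembed A) x i = mpscale (mcm A) x i.

Definition in_attr n (A : 'M[R]_n) (x : mpvec n) : Prop :=
  exists k : nat, in_eigenspace A (mpapply (mppow (mpembed A) k) x).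

Definition strongly_stable n (A : 'M[R]_n) : Prop := forall x : mpvec n, in_attr A x.

(* pdiag(d_1,...,d_n), with d indexed from 1: entry (i,i) (0-based i) is d (i+1);
   off-diagonal entries are the real number 0 *)
Definition pdiag n (d : nat -> R) : 'M[R]_n :=
  \matrix_(i < n, j < n) (if i == j then d i.+1 else 0).

End MaxPlus.

(* Write D^k_ij for the maximal weight of a walk of length k from i to j in the
   complete digraph with loop weights d_i and arc weights 0; strong stability
   follows once D^(K+1) = lambda(D) (x) D^K for some K.  If d_n >= 0, a long optimal
   walk moves from i to a vertex t with d_t = d_n, loops there and moves on to j,
   so D^k_ij = (k - h) d_n with h in {0, 1, 2} the number of non-loop steps;
   walks avoiding such vertices weigh at most k max(gap, 0), where gap < d_n bounds
   the other d_i, and this eventually loses.  If d_n < 0 and n >= 3, then lambda(D) = 0 and every walk of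
   length >= 2 can avoid loops, so D^2 = D^3 = 0.  If n = 2 and d_2 < 0, the map
   (x_1, x_2) |-> (max(d_1 + x_1, x_2), max(x_1, d_2 + x_2)) preserves x_1 <> x_2,
   while V(D) is the diagonal. *)

From HB Require Import structures.
From mathcomp Require Import all_boot all_order all_algebra.
From mathcomp Require Import reals.
From mathcomp Require Import lra zify.
From Stdlib Require Import FunctionalExtensionality.
Import Order.TTheory GRing.Theory Num.Theory.
Local Open Scope ring_scope.
Set Implicit Arguments. Unset Strict Implicit. Unset Printing Implicit Defensive.

Section MaxPlusSemiring.
Variable R : realType.
Implicit Types a b c : option R.
Local Notation mpadd := (@mpadd R).
Local Notation mpmul := (@mpmul R).

Lemma mpaddA : associative mpadd.
Proof. by case=> [a|] [b|] [c|] //=; rewrite maxA. Qed.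

Lemma mpaddC : commutative mpadd.
Proof. by case=> [a|] [b|] //=; rewrite maxC. Qed.

Lemma mpadd0l : left_id None mpadd.
Proof. by case. Qed.

HB.instance Definition _ :=
  Monoid.isComLaw.Build (option R) None mpadd mpaddA mpaddC mpadd0l.

Lemma mpmulA : associative mpmul.
Proof. by case=> [a|] [b|] [c|] //=; rewrite addrA. Qed.

Lemma mpmul1l a : mpmul (Some 0) a = a.
Proof. by case: a => //= a; rewrite add0r. Qed.

Lemma mpmul_sumr (I : finType) a (F : I -> option R) :
  mpmul a (\big[mpadd/None]_i F i) = \big[mpadd/None]_i mpmul a (F i).
Proof.
apply: big_morph; last by case: a.
by case: a => [a|] [b|] [c|] //=; rewrite addr_maxr.
Qed.

Lemma mpmul_suml (I : finType) a (F : I -> option R) :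
  mpmul (\big[mpadd/None]_i F i) a = \big[mpadd/None]_i mpmul (F i) a.
Proof.
apply: (big_morph (mpmul^~ a)); last by case: a.
by case: a => [a|] [b|] [c|] //=; rewrite addr_maxl.
Qed.

Definition mple a b : Prop :=
  match a, b with
  | None, _ => True
  | Some x, Some y => x <= y
  | Some _, None => False
  end.

Lemma mple_trans a b c : mple a b -> mple b c -> mple a c.
Proof. by case: a b c => [a|] [b|] [c|] //=; apply: le_trans. Qed.

Lemma mple_anti a b : mple a b -> mple b a -> a = b.
Proof. by case: a b => [a|] [b|] //= ab ba; rewrite (@le_anti _ _ a b) ?ab ?ba. Qed.

Lemma mple_refl a : mple a a.
Proof. by case: a => /=. Qed.

Lemma mpleM a a' b b' : mple a a' -> mple b b' -> mple (mpmul a b) (mpmul a' b').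
Proof. by case: a a' b b' => [a|] [a'|] [b|] [b'|] //=; apply: lerD. Qed.

Lemma mple_big_ub (I : finType) (F : I -> option R) c :
  (forall i, mple (F i) c) -> mple (\big[mpadd/None]_i F i) c.
Proof.
move=> FC; apply: (big_ind (mple^~ c)) => // x y.
by case: x y c {FC} => [x|] [y|] [c|] //= xc yc; rewrite ge_max xc yc.
Qed.

Lemma mple_big_lb (I : finType) (F : I -> option R) a i0 :
  mple a (F i0) -> mple a (\big[mpadd/None]_i F i) .
Proof.
rewrite (bigD1 i0) //=; move: (\big[_/_]_(i | _) _) => b.
by case: a (F i0) b => [a|] [x|] [b|] //= ax; rewrite le_max ax.
Qed.

End MaxPlusSemiring.

Section MaxPlusMatrix.
Variables (R : realType) (n : nat).
Implicit Types (A B : mpmx R n) (x : mpvec R n).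
Local Notation mpadd := (@mpadd R).
Local Notation mpmul := (@mpmul R).

Lemma mpapply_mul A B x : mpapply (mpmxmul A B) x = mpapply A (mpapply B x).
Proof.
apply: functional_extensionality => i; rewrite /mpapply /mpmxmul.
under eq_bigr => j _ do rewrite mpmul_suml.
under [RHS]eq_bigr => l _ do rewrite mpmul_sumr.
by rewrite exchange_big; apply: eq_bigr => l _; apply: eq_bigr => j _; rewrite mpmulA.
Qed.

Lemma mpapply_pow0 A x : mpapply (mppow A 0) x = x.
Proof.
apply: functional_extensionality => i; rewrite /mpapply (bigD1 i) //= big1.
  by rewrite /mpone eqxx mpmul1l; case: (x i).
by move=> j /negbTE; rewrite /mpone eq_sym => ->.
Qed.

Lemma mppowS A k i j :
  mppow A k.+1 i j = \big[mpadd/None]_l mpmul (A i l) (mppow A k l j).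
Proof. by []. Qed.

Lemma mppow1 A i j : mppow A 1 i j = A i j.
Proof.
rewrite mppowS (bigD1 j) //= big1 => [|l /negbTE]; rewrite /mppow /= /mpone ?eqxx.
  by case: (A i j) => //= a; rewrite addr0.
by move=> ->; case: (A i l).
Qed.

Lemma mpapply_pow A k x :
  mpapply (mppow A k.+1) x = mpapply A (mpapply (mppow A k) x).
Proof. exact: mpapply_mul. Qed.

Lemma mpapply_scale A c x :
  mpapply (fun i j => mpmul (Some c) (A i j)) x = mpscale c (mpapply A x).
Proof.
apply: functional_extensionality => i; rewrite /mpscale /mpapply mpmul_sumr.
by apply: eq_bigr => j _; rewrite mpmulA.
Qed.

Lemma strongly_stable_of_pow (A : 'M[R]_n) K :
  (forall i j, mppow (mpembed A) K.+1 i j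
               = mpmul (Some (mcm A)) (mppow (mpembed A) K i j)) ->
  strongly_stable A.
Proof.
move=> AK x; exists K => i; rewrite -mpapply_pow -mpapply_scale.
by congr (mpapply _ _ i); do 2 apply: functional_extensionality => ?; apply: AK.
Qed.

End MaxPlusMatrix.

Section MaxCycleMean.
Variable R : realType.

Lemma size_elem_cycles n (s : seq 'I_n) : s \in elem_cycles n -> (0 < size s)%N.
Proof.
rewrite mem_filter => /andP [_ /flatten_mapP [k]].
by rewrite mem_iota => /andP [k_gt0 _] /mapP [t _ ->]; rewrite size_tuple.
Qed.

Lemma mem_elem_cycles n (s : seq 'I_n) :
  uniq s -> (0 < size s <= n)%N -> s \in elem_cycles n.
Proof.
move=> s_uniq /andP [s_gt0 s_le]; rewrite mem_filter s_uniq; apply/flatten_mapP.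
exists (size s); first by rewrite mem_iota s_gt0 add1n ltnS.
by apply/mapP; exists (in_tuple s); rewrite ?mem_enum.
Qed.

Lemma cycle_mean_le n (A : 'M[R]_n) s v :
  (0 < size s)%N -> (forall i j, A i j <= v) -> cycle_mean A s <= v.
Proof.
move=> s_gt0 Av; rewrite /cycle_mean ler_pdivrMr ?ltr0n //.
apply: le_trans (_ : \sum_(p <- zip s (rot 1 s)) v <= _); first exact: ler_sum.
by rewrite big_const_seq count_predT size_zip size_rot minnn iter_addr_0 mulr_natr.
Qed.

Lemma mcm_eq n (A : 'M[R]_n) v :
  (exists2 s, s \in elem_cycles n & cycle_mean A s = v) ->
  (forall s, s \in elem_cycles n -> cycle_mean A s <= v) ->
  mcm A = v.
Proof.
move=> [s0 s0_cyc <-] ub; rewrite /mcm foldrE big_seq.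
set l := map _ _; have s0l : cycle_mean A s0 \in l by apply: map_f.
apply: le_anti; rewrite (le_bigmax_seq _ _ _ _ s0l s0l) andbT.
have ub_l y : y \in l -> y <= cycle_mean A s0 by move=> /mapP [s s_cyc ->]; apply: ub.
apply: bigmax_le => //; apply: ub_l.
by case: (l) s0l => //= y l' _; apply: mem_head.
Qed.

End MaxCycleMean.

Section PdiagBasics.
Variables (R : realType) (n : nat) (d : nat -> R).

Lemma mpembed_pdiag i j :
  mpembed (pdiag n d) i j = Some (if i == j then d i.+1 else 0).
Proof. by rewrite /mpembed /pdiag mxE. Qed.

(* The loop at n has mean d_n and the 2-cycle (1 2) has mean 0; no mean is
   larger, since every entry is at most max(d_n, 0). *)
Lemma mcm_pdiag : (1 < n)%N -> (forall i : 'I_n, d i.+1 <= d n) ->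
  mcm (pdiag n d) = Num.max (d n) 0.
Proof.
move=> n_gt1 d_le; apply: mcm_eq => [|s s_cyc]; last first.
  apply: cycle_mean_le (size_elem_cycles s_cyc) _ => i j.
  by rewrite mxE le_max; case: eqP => _; rewrite ?d_le ?lexx ?orbT.
have [dn_ge0|dn_lt0] := leP 0 (d n).
  have last_lt : (n.-1 < n)%N by rewrite prednK // ltnW.
  exists [:: Ordinal last_lt]; first by rewrite mem_elem_cycles //= ltnW.
  by rewrite /cycle_mean big_seq1 mxE eqxx /= prednK ?(ltnW n_gt1) // divr1.
exists [:: Ordinal (ltnW n_gt1); Ordinal n_gt1]; first exact: mem_elem_cycles.
by rewrite /cycle_mean /= !big_cons big_nil !mxE /= !addr0 mul0r.
Qed.

End PdiagBasics.

Lemma exists_ord_neq2 n (i j : 'I_n) :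
  (2 < n)%N -> exists l : 'I_n, (l != i) && (l != j).
Proof.
move=> n_gt2.
have [k [k_lt /andP [ki kj]]] : exists k, (k < 3)%N /\ (k != i) && (k != j).
  exists (if (i != 0 :> nat) && (j != 0 :> nat) then 0
          else if (i != 1 :> nat) && (j != 1 :> nat) then 1 else 2)%N.
  by case: ifP; [|case: ifP]; lia.
by exists (Ordinal (leq_trans k_lt n_gt2)); rewrite -!val_eqE /= ki kj.
Qed.

Section PdiagNonpos.
Variables (R : realType) (n : nat) (d : nat -> R).
Hypothesis n_gt2 : (2 < n)%N.
Hypothesis d_le : forall i : 'I_n, d i.+1 <= d n.
Hypothesis dn_le0 : d n <= 0.
Local Notation D := (mpembed (pdiag n d)).

Lemma pdiag_pow_le0 k i j : mple (mppow D k i j) (Some 0).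
Proof.
elim: k i j => [|k IHk] i j; first by rewrite /mppow /= /mpone; case: (i == j) => /=.
rewrite mppowS; apply: mple_big_ub => l; rewrite -[0]addr0.
apply: (mpleM (a' := Some 0) (b' := Some 0)) => //; rewrite mpembed_pdiag /=.
by case: (i == l) => //; apply: le_trans (d_le i) dn_le0.
Qed.

(* With a third vertex at hand, a walk of length >= 2 between any two vertices
   can avoid all loops, and so has weight 0. *)
Lemma pdiag_pow_ge0 k i j : mple (Some 0) (mppow D k.+2 i j).
Proof.
have hop0 i' l : l != i' -> mple (Some 0) (D i' l).
  by move=> li; rewrite mpembed_pdiag eq_sym (negbTE li) /=.
elim: k i j => [|k IHk] i j; have [l /andP [li lj]] := exists_ord_neq2 i j n_gt2;
  rewrite mppowS; apply: (mple_big_lb (i0 := l)); rewrite -[0]addr0;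
  apply: (mpleM (a := Some 0) (b := Some 0)) (hop0 _ _ li) _ => //.
by rewrite mppow1; apply: hop0; rewrite eq_sym.
Qed.

Lemma pdiag_stable_nonpos : strongly_stable (pdiag n d).
Proof.
have pow_eq0 k i j : mppow D k.+2 i j = Some 0.
  by apply: mple_anti; [apply: pdiag_pow_le0 | apply: pdiag_pow_ge0].
apply: (@strongly_stable_of_pow _ _ _ 2) => i j.
by rewrite !pow_eq0 mcm_pdiag ?(ltnW n_gt2) // (max_idPr dn_le0) /= addr0.
Qed.

End PdiagNonpos.

Ltac lra_max :=
  rewrite ?ge_max ?le_max ?gt_max ?lt_max; repeat (apply/andP; split);
  first [lra | by apply/orP; left; lra | by apply/orP; right; lra].

Section PdiagNonneg.
Variables (R : realType) (n : nat) (d : nat -> R).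
Hypothesis n_gt1 : (1 < n)%N.
Hypothesis d_le : forall i : 'I_n, d i.+1 <= d n.
Hypothesis dn_ge0 : 0 <= d n.
Local Notation D := (mpembed (pdiag n d)).
Local Notation lam := (d n).
Implicit Types i j l t : 'I_n.

Definition top (i : 'I_n) := lam <= d i.+1.

Lemma top_eq i : top i -> d i.+1 = lam.
Proof. by move=> ti; apply: le_anti; rewrite d_le. Qed.

Lemma exists_top : exists t, top t.
Proof.
have n1_lt : (n.-1 < n)%N by rewrite ltn_predL ltnW.
by exists (Ordinal n1_lt); rewrite /top /= prednK ?(ltnW n_gt1).
Qed.

Definition gap := \big[Num.max/(lam - 1)]_(i | ~~ top i) d i.+1.

Lemma gap_lt : gap < lam.
Proof. by apply: bigmax_lt => [|i]; rewrite ?ltNge //; lra. Qed.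

Lemma le_gap i : ~~ top i -> d i.+1 <= gap.
Proof. by move=> ti; rewrite (le_bigmax_cond _ (fun i : 'I_n => d i.+1) ti). Qed.

(* The number of non-loop steps of an optimal long walk from i to j: move to a
   vertex t with d_t = lam, loop there, then move on to j. *)
Definition hops (i j : 'I_n) : R :=
  if (i == j) && top i then 0 else if top i || top j then 1 else 2.

Lemma hops_hop i l j : l != i -> hops i j <= 1 + hops l j.
Proof.
rewrite /hops => li; case: (eqVneq l j) => [<-|_] /=.
  by rewrite eq_sym (negbTE li) orbb; case: (top i); case: (top l) => /=; lra.
by case: (i == j); case: (top i); case: (top l); case: (top j) => /=; lra.
Qed.

Lemma hops_top_ntop i j : top i -> ~~ top j -> hops i j = 1.
Proof.
move=> ti tj; rewrite /hops ti /=.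
by case: (eqVneq i j) tj => [<-|]; rewrite ?ti.
Qed.

Lemma hops_via_top i j : ~~ top i -> exists2 l, top l & hops i j = 1 + hops l j.
Proof.
move=> ti; have [tj|tj] := boolP (top j).
  by exists j => //; rewrite /hops (negbTE ti) tj eqxx andbF addr0.
have [t tt] := exists_top; exists t; rewrite // (hops_top_ntop tt tj).
by rewrite /hops (negbTE ti) (negbTE tj) andbF.
Qed.

(* For walks between non-top vertices, either at least two non-loop steps are
   taken or all loops sit at i and j, of weight at most gap. *)
Definition pow_ub k i j : R :=
  if top i || top j then (k%:R - hops i j) * lam
  else Num.max ((k%:R - 2) * lam) (k%:R * Num.max gap 0).

Lemma gap0_le : Num.max gap 0 <= lam.
Proof. by rewrite ge_max dn_ge0 ltW ?gap_lt. Qed.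

Lemma pow_ub_loop k i j : d i.+1 + pow_ub k i j <= pow_ub k.+1 i j.
Proof.
have dlam := d_le i; have gap_ge : gap <= Num.max gap 0 by rewrite le_max lexx.
rewrite /pow_ub -[k.+1%:R]natr1; case ti: (top i) => /=.
  by rewrite (top_eq ti) !(mulrBl, mulrDl) mul1r; lra.
have dgap := le_gap (negbT ti); case: (top j) => /=; rewrite !(mulrBl, mulrDl) ?mul1r.
  lra.
rewrite addr_maxr; lra_max.
Qed.

Lemma pow_ub_hop k i l j : l != i -> pow_ub k l j <= pow_ub k.+1 i j.
Proof.
move=> li; have KM := ler_wpM2l (ler0n R k) gap0_le; have M_le := gap0_le.
have M_ge0 : 0 <= Num.max gap 0 by rewrite le_max lexx orbT.
rewrite /pow_ub -[k.+1%:R]natr1.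
have [tij|/norP [/negbTE nti /negbTE ntj]] := boolP (top i || top j); last first.
  case tl: (top l); rewrite ?ntj /= ?(hops_top_ntop tl) ?ntj //;
  rewrite !(mulrBl, mulrDl) ?mul1r; lra_max.
have [tlj|/norP [/negbTE ntl /negbTE ntj]] := boolP (top l || top j).
  have := ler_wpM2r dn_ge0 (hops_hop j li).
  by rewrite !(mulrBl, mulrDl) ?mul1r; lra.
rewrite ntj orbF in tij; rewrite hops_top_ntop ?ntj //=.
rewrite !(mulrBl, mulrDl) ?mul1r; lra_max.
Qed.

Lemma pdiag_pow_ub k i j : mple (mppow D k i j) (Some (pow_ub k i j)).
Proof.
elim: k i j => [|k IHk] i j.
  rewrite /mppow /= /mpone /pow_ub /hops; case: eqP => [<-|] //=.
  rewrite orbb; case: (top i) => /=; first by rewrite subrr mul0r.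
  by rewrite !mul0r le_max lexx orbT.
rewrite mppowS; apply: mple_big_ub => l; rewrite mpembed_pdiag.
apply: mple_trans (mpleM (mple_refl _) (IHk l j)) _ => /=.
by case: (eqVneq i l) => [<-|li]; rewrite ?add0r ?pow_ub_loop ?pow_ub_hop // eq_sym.
Qed.

Lemma pdiag_pow_lb_top k t j : top t ->
  mple (Some ((k.+1%:R - hops t j) * lam)) (mppow D k.+1 t j).
Proof.
move=> tt; elim: k => [|k IHk].
  rewrite mppow1 mpembed_pdiag /hops tt andbT orTb /=.
  by case: eqP => _; rewrite ?subr0 ?mul1r ?(top_eq tt) ?subrr ?mul0r.
rewrite mppowS; apply: (mple_big_lb (i0 := t)).
have -> : (k.+2%:R - hops t j) * lam = lam + (k.+1%:R - hops t j) * lam.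
  by rewrite -[k.+2%:R]natr1; lra.
have loop_t : mple (Some lam) (D t t) by rewrite mpembed_pdiag eqxx (top_eq tt) /=.
exact: mpleM loop_t IHk.
Qed.

Lemma pdiag_pow_lb k i j :
  mple (Some ((k.+2%:R - hops i j) * lam)) (mppow D k.+2 i j).
Proof.
have [ti|ti] := boolP (top i); first exact: pdiag_pow_lb_top.
have [l tl ->] := hops_via_top j ti.
rewrite mppowS; apply: (mple_big_lb (i0 := l)).
have -> : (k.+2%:R - (1 + hops l j)) * lam = 0 + (k.+1%:R - hops l j) * lam.
  by rewrite -[k.+2%:R]natr1; lra.
have hop_il : mple (Some 0) (D i l).
  rewrite mpembed_pdiag; case: (eqVneq i l) => [il|_] //=.
  by rewrite il tl in ti.
exact: mpleM hop_il (pdiag_pow_lb_top k j tl).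
Qed.

Lemma gap_walks_eventually_dominated :
  exists N, forall k, (N <= k)%N -> k%:R * Num.max gap 0 <= (k%:R - 2) * lam.
Proof.
have M_ge0 : 0 <= Num.max gap 0 by rewrite le_max lexx orbT.
have [lam_gt0|lam_le0] := ltrP 0 lam; last first.
  have lam0 : lam = 0 by apply: le_anti; rewrite lam_le0.
  have M0 : Num.max gap 0 = 0 by apply: le_anti; rewrite M_ge0 andbT -{2}lam0 gap0_le.
  by exists 0%N => k _; rewrite M0 lam0 !mulr0.
have M_lt : Num.max gap 0 < lam by rewrite gt_max gap_lt.
have x_ge0 : 0 <= 2 * lam / (lam - Num.max gap 0) by rewrite divr_ge0 //; lra.
exists (Num.Def.archi_bound (2 * lam / (lam - Num.max gap 0))) => k Nk.
have := lt_le_trans (archi_boundP x_ge0) (_ : _ <= k%:R); rewrite ler_nat => /(_ Nk).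
by rewrite ltr_pdivrMr ?subr_gt0 // mulrBr mulrBl; lra.
Qed.

Lemma pdiag_pow_eventually : exists N, forall k i j,
  (N <= k)%N -> mppow D k i j = Some ((k%:R - hops i j) * lam).
Proof.
have [N short] := gap_walks_eventually_dominated; exists N.+2 => -[|[|k]] i j // Nk.
apply: mple_anti (pdiag_pow_lb k i j); apply: mple_trans (pdiag_pow_ub _ i j) _.
rewrite /pow_ub; case: ifP => [_|/negbT /norP [ti tj]]; first exact: mple_refl.
by rewrite /hops (negbTE ti) (negbTE tj) andbF (max_idPl (short _ _)) //=; lia.
Qed.

Lemma pdiag_stable_nonneg : strongly_stable (pdiag n d).
Proof.
have [N powE] := pdiag_pow_eventually.
apply: (@strongly_stable_of_pow _ _ _ N) => i j.
rewrite !powE // mcm_pdiag // (max_idPl dn_ge0) /=; congr Some.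
by rewrite -[N.+1%:R]natr1; lra.
Qed.

End PdiagNonneg.

Section Pdiag2.
Variables (R : realType) (d : nat -> R).
Local Notation D := (mpembed (pdiag 2 d)).
Local Notation mpadd := (@mpadd R).
Local Notation mpmul := (@mpmul R).

Lemma ord2P (i : 'I_2) : i = ord0 \/ i = ord_max.
Proof. by case: i => [[|[|//]]] i_lt; [left|right]; apply: val_inj. Qed.

Lemma pdiag2_apply0 (x : mpvec R 2) :
  mpapply D x ord0 = mpadd (mpmul (Some (d 1%N)) (x ord0)) (x ord_max).
Proof.
rewrite /mpapply big_ord_recl big_ord1 !mpembed_pdiag /= (_ : lift _ _ = ord_max).
  by case: (x ord0) => [a|]; case: (x ord_max) => [b|] //=; rewrite add0r.
exact: val_inj.
Qed.

Lemma pdiag2_apply1 (x : mpvec R 2) :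
  mpapply D x ord_max = mpadd (x ord0) (mpmul (Some (d 2%N)) (x ord_max)).
Proof.
rewrite /mpapply big_ord_recl big_ord1 !mpembed_pdiag /= (_ : lift _ _ = ord_max).
  by case: (x ord0) => [a|]; case: (x ord_max) => [b|] //=; rewrite add0r.
exact: val_inj.
Qed.

Hypothesis d12 : d 1%N <= d 2%N.
Hypothesis d2_lt0 : d 2%N < 0.

Lemma pdiag2_diag_lt0 : d 1%N < 0 /\ d 2%N < 0.
Proof. by split; rewrite ?(le_lt_trans d12). Qed.

Lemma mcm_pdiag2 : mcm (pdiag 2 d) = 0.
Proof.
rewrite mcm_pdiag // ?(max_idPr (ltW d2_lt0)) // => i.
by case: (ord2P i) => -> //=; apply: d12.
Qed.

Lemma pdiag2_eigenspace y : in_eigenspace (pdiag 2 d) y <-> y ord0 = y ord_max.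
Proof.
rewrite /in_eigenspace /mpscale mcm_pdiag2; split => [eig|y01 i].
  have := eig ord0; have := eig ord_max.
  rewrite pdiag2_apply0 pdiag2_apply1 !mpmul1l.
  case: (y ord0) (y ord_max) => [a|] [b|] //= [e1] [e0].
  have : a <= b by rewrite -[X in _ <= X]e1; lra_max.
  have : b <= a by rewrite -[X in _ <= X]e0; lra_max.
  by move=> ba ab; congr Some; apply: le_anti; rewrite ab ba.
have [d1_lt0 d2_neg] := pdiag2_diag_lt0.
rewrite mpmul1l; case: (ord2P i) => ->; rewrite ?pdiag2_apply0 ?pdiag2_apply1 -y01;
  by case: (y ord0) => //= a; congr Some; apply/eqP; rewrite eq_le; lra_max.
Qed.

Lemma pdiag2_apply_eq x :
  mpapply D x ord0 = mpapply D x ord_max -> x ord0 = x ord_max.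
Proof.
have [d1_lt0 d2_neg] := pdiag2_diag_lt0.
rewrite pdiag2_apply0 pdiag2_apply1.
case: (x ord0) (x ord_max) => [a|] [b|] //= [e]; try (exfalso; lra).
have [a_lt_b|b_lt_a|->] // := ltgtP a b; exfalso.
- have : Num.max a (d 2%N + b) < b by lra_max.
  have : b <= Num.max (d 1%N + a) b by lra_max.
  lra.
- have : Num.max (d 1%N + a) b < a by lra_max.
  have : a <= Num.max a (d 2%N + b) by lra_max.
  lra.
Qed.

Lemma pdiag2_attr x : in_attr (pdiag 2 d) x <-> x ord0 = x ord_max.
Proof.
split=> [[k /pdiag2_eigenspace]|x01]; last first.
  by exists 0%N; rewrite mpapply_pow0; apply/pdiag2_eigenspace.
elim: k => [|k IHk]; first by rewrite mpapply_pow0.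
by rewrite mpapply_pow => /pdiag2_apply_eq.
Qed.

Lemma pdiag2_not_strongly_stable : ~ strongly_stable (pdiag 2 d).
Proof. by move/(_ (fun i => if i == ord0 then Some 0 else None))/pdiag2_attr. Qed.

End Pdiag2.

Theorem corollary4p9 (R : realType) :
  (forall d : nat -> R, d 1%N <= d 2%N -> d 2%N < 0 ->
     (forall x : mpvec R 2, in_attr (pdiag 2 d) x <-> x ord0 = x ord_max) /\
     ~ strongly_stable (pdiag 2 d)) /\
  (forall (n : nat) (d : nat -> R), (2 <= n)%N ->
     (forall i j : nat, (1 <= i)%N -> (i <= j)%N -> (j <= n)%N -> d i <= d j) ->
     ~ (n = 2%N /\ d 2%N < 0) ->
     strongly_stable (pdiag n d)).
Proof.
split=> [d d12 d2_lt0 | n d n_ge2 d_mono not_exception].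
  by split=> [x|]; [apply: pdiag2_attr | apply: pdiag2_not_strongly_stable].
have d_le (i : 'I_n) : d i.+1 <= d n by apply: d_mono.
have [dn_ge0|dn_lt0] := leP 0 (d n); first exact: pdiag_stable_nonneg.
apply: pdiag_stable_nonpos d_le (ltW dn_lt0).
rewrite ltn_neqAle n_ge2 andbT eq_sym; apply/eqP => n2.
by apply: not_exception; subst n.
Qed.
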